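(* For $k\geqslant 0$ let $B_k$ be the number of equivalence classes, with respect to the relation $\cong$, of ultrametric spaces $(X,d)\in\mathfrak U$ with $|X|=k+1$. Then for every $k\geqslant1$ $$B_k=\begin{cases}\dfrac{B_i(B_i+1)}{2}+\sum\limits_{j=0}^{i-1}B_{k-j-1}B_j, & \text{if } k=2i+1,\\[2mm] \sum\limits_{j=0}^{i-1}B_{k-j-1}B_j, & \text{if } k=2i,\end{cases}$$ and $B_1=B_2=1$, $B_3=2$.
   Context: $\operatorname{Sp}(X)=\{d(x,y):x\neq y\}$; $\mathfrak U$ is the class of finite ultrametric spaces $X$ with $|\operatorname{Sp}(X)|=|X|-1$. For a finite ultrametric space $X$ (assumed, up to isometry, to satisfy $X\cap\operatorname{Sp}(X)=\varnothing$), the representing tree $T_X$ is the labelled rooted tree defined recursively: for $X=\{x\}$ it is a single node labelled $x$; for $|X|\ge2$ the root is labelled $\operatorname{diam}X$ and has one child for each class $X_i$ of the equivalence relation $x\sim y\iff d(x,y)<\operatorname{diam}X$, that child being labelled $x$ if $X_i=\{x\}$ and otherwise labelled $\operatorname{diam}X_i$ and carrying the recursively constructed tree for $X_i$. $\overline{T}_X$ is $T_X$ with labels erased. For finite ultrametric spaces $X,Y$, $X\cong Y$ means that the rooted trees $\overline{T}_X$ and $\overline{T}_Y$ are isomorphic. *)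

From HB Require Import structures.
From mathcomp Require Import all_boot all_order all_algebra.
From mathcomp Require Import boolp classical_sets reals.
From Stdlib Require List Sorting.Permutation.
Set Implicit Arguments. Unset Strict Implicit. Unset Printing Implicit Defensive.
Import Order.TTheory GRing.Theory Num.Theory.
Local Open Scope ring_scope.

Inductive rtree : Type := RNode of seq rtree.

Inductive rtree_iso : rtree -> rtree -> Prop :=
| rtree_iso_node (ts us us' : seq rtree) :
    Permutation.Permutation us us' -> List.Forall2 rtree_iso ts us' ->
    rtree_iso (RNode ts) (RNode us).

Record ultrametric (R : realType) := Ultrametric {
  um_carrier :> finType;
  um_dist : um_carrier -> um_carrier -> R;
  um_ge0 : forall x y, 0 <= um_dist x y;
  um_eq0 : forall x y, um_dist x y = 0 <-> x = y;
  um_sym : forall x y, um_dist x y = um_dist y x;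
  um_ultra : forall x y z, um_dist x z <= Num.max (um_dist x y) (um_dist y z)
}.

Section Tree.
Variables (R : realType) (X : ultrametric R).
Local Notation d := (@um_dist R X).
Local Notation car := (um_carrier X).

Definition spectrum : seq R :=
  undup [seq d p.1 p.2 | p <- enum [pred p : (car * car)%type | p.1 != p.2]].

Definition diam (A : {set car}) : R :=
  \big[Num.max/0]_(x in A) \big[Num.max/0]_(y in A) d x y.

Definition um_classes (A : {set car}) : {set {set car}} :=
  [set [set y in A | d x y < diam A] | x in A].

(* unlabelled representing tree of the subspace A (fuel n >= #|A|) *)
Fixpoint rep_tree_fuel (n : nat) (A : {set car}) : rtree :=
  match n with
  | 0 => RNode [::]
  | n'.+1 => if (#|A| <= 1)%N then RNode [::]
             else RNode [seq rep_tree_fuel n' B | B <- enum (um_classes A)]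
  end.

Definition rep_tree : rtree := rep_tree_fuel #|car| [set: car].
End Tree.

Definition in_U (R : realType) (X : ultrametric R) : Prop :=
  size (spectrum X) = (#|um_carrier X| - 1)%N.

Definition um_cong (R : realType) (X Y : ultrametric R) : Prop :=
  rtree_iso (rep_tree X) (rep_tree Y).

(* "there are exactly n equivalence classes w.r.t. \cong of spaces in U with
   k+1 points": a family of n pairwise non-\cong representatives that meets
   every class. *)
Definition num_classes_U (R : realType) (k n : nat) : Prop :=
  exists f : 'I_n -> ultrametric R,
    (forall i, in_U (f i) /\ #|um_carrier (f i)| = k.+1) /\
    (forall i j, um_cong (f i) (f j) -> i = j) /\
    (forall X : ultrametric R, in_U X -> #|um_carrier X| = k.+1 ->
        exists i, um_cong X (f i)).

Definition B (R : realType) (k : nat) : nat := xget 0%N (num_classes_U R k).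

From HB Require Import structures.
From mathcomp Require Import all_boot all_order all_algebra.
From mathcomp Require Import boolp reals.
From mathcomp Require classical_sets.
From mathcomp Require Import zify lra.
From Stdlib Require List Sorting.Permutation.
Set Implicit Arguments. Unset Strict Implicit. Unset Printing Implicit Defensive.

(* In a finite ultrametric space the distances inside the classes of
   "d < diam A" together with diam A itself exhaust Sp(A), so
   |Sp(A)| <= 1 + sum_B |Sp(B)|, and by induction |Sp(A)| <= |A| - 1.  In the
   equality case (the class U) there are exactly two classes, each again in U:
   the representing tree of a space in U is a full binary tree with |X|
   leaves.  Conversely, gluing two spaces at a distance above both diameters,
   after lifting the distances of the second above those of the first,
   realizes every full binary tree by a space in U.  Hence B_k counts unordered
   full binary trees with k+1 leaves, and splitting at the root by the sizes of
   the two subtrees gives the recurrence; B_i (B_i + 1) / 2 counts the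
   unordered pairs of trees of equal size. *)

Inductive btree : Type := Leaf | Node of btree & btree.

Fixpoint btree_eqb (t u : btree) : bool :=
  match t, u with
  | Leaf, Leaf => true
  | Node a b, Node c e => btree_eqb a c && btree_eqb b e
  | _, _ => false
  end.

Lemma btree_eqP : Equality.axiom btree_eqb.
Proof.
elim=> [|a IHa b IHb] [|c e] /=; try by constructor.
apply: (iffP andP) => [[/IHa -> /IHb ->]//|[<- <-]].
by split; [apply/IHa | apply/IHb].
Qed.
HB.instance Definition _ := hasDecEq.Build btree btree_eqP.

Fixpoint leaves (t : btree) : nat :=
  if t is Node l r then leaves l + leaves r else 1.

Lemma leaves_gt0 t : 0 < leaves t.
Proof. by elim: t => //= l Hl r _; rewrite addn_gt0 Hl. Qed.

Fixpoint btree_iso (t u : btree) : bool :=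
  match t, u with
  | Leaf, Leaf => true
  | Node a b, Node c e =>
      (btree_iso a c && btree_iso b e) || (btree_iso a e && btree_iso b c)
  | _, _ => false
  end.

Lemma btree_iso_refl t : btree_iso t t.
Proof. by elim: t => //= a -> b ->. Qed.

Lemma btree_iso_sym t u : btree_iso t u = btree_iso u t.
Proof.
elim: t u => [|a IHa b IHb] [|c e] //=.
by rewrite IHa IHb (IHa e) (IHb c) andbC [btree_iso e a && _]andbC.
Qed.

Lemma btree_iso_trans t u v : btree_iso t u -> btree_iso u v -> btree_iso t v.
Proof.
elim: t u v => [|a IHa b IHb] [|c e] [|f g] //=.
case/orP=> /andP[h1 h2] /orP[] /andP[h3 h4]; apply/orP.
- by left; rewrite (IHa _ _ h1 h3) (IHb _ _ h2 h4).
- by right; rewrite (IHa _ _ h1 h3) (IHb _ _ h2 h4).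
- by right; rewrite (IHa _ _ h1 h4) (IHb _ _ h2 h3).
- by left; rewrite (IHa _ _ h1 h4) (IHb _ _ h2 h3).
Qed.

Lemma btree_iso_leaves t u : btree_iso t u -> leaves t = leaves u.
Proof.
elim: t u => [|a IHa b IHb] [|c e] //= /orP[] /andP[/IHa -> /IHb ->] //.
by rewrite addnC.
Qed.

Fixpoint rtree_of_btree (t : btree) : rtree :=
  if t is Node l r then RNode [:: rtree_of_btree l; rtree_of_btree r]
  else RNode [::].

Lemma rtree_iso_btree t u :
  rtree_iso (rtree_of_btree t) (rtree_of_btree u) <-> btree_iso t u.
Proof.
split.
- elim: t u => [|a IHa b IHb] [|c e] /= H; inversion H as [ts us us' HP HF]; subst => //.
  + by inversion HF; subst; have := Permutation.Permutation_length HP.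
  + by inversion HF; subst; have := Permutation.Permutation_length HP.
  + inversion HF as [|x y l l' Hxy HF2]; subst.
    inversion HF2 as [|x2 y2 l2 l2' Hxy2 HF3]; subst; inversion HF3; subst.
    have [[E1 E2]|[E1 E2]] :=
      Permutation.Permutation_length_2_inv (Permutation.Permutation_sym HP); subst.
    * by rewrite (IHa _ Hxy) (IHb _ Hxy2).
    * by rewrite (IHa _ Hxy) (IHb _ Hxy2) orbT.
- elim: t u => [|a IHa b IHb] [|c e] //= H.
  + by apply: (rtree_iso_node (us' := [::])); constructor.
  + case/orP: H => /andP[/IHa h1 /IHb h2].
    * by apply: (rtree_iso_node (us' := [:: _; _])); repeat constructor.
    * apply: (rtree_iso_node (us' := [:: rtree_of_btree e; rtree_of_btree c])).
        exact: Permutation.perm_swap.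
      by repeat constructor.
Qed.

(* One node [Node x y] for each unordered pair {x, y} of items of [s]. *)
Fixpoint upairs (s : seq btree) : seq btree :=
  if s is x :: s' then [seq Node x y | y <- s] ++ upairs s' else [::].

Lemma upairs_cons z s : upairs (z :: s) = [seq Node z y | y <- z :: s] ++ upairs s.
Proof. by []. Qed.

Lemma upairsP s u :
  u \in upairs s -> exists x y, [/\ u = Node x y, x \in s & y \in s].
Proof.
elim: s => // z s IH; rewrite upairs_cons mem_cat => /orP[/mapP[y Hy ->]|/IH[x [y [-> Hx Hy]]]].
  by exists z, y; rewrite mem_head.
by exists x, y; rewrite !inE Hx Hy !orbT.
Qed.

Lemma upairs_index s x y : uniq s -> Node x y \in upairs s ->
  [/\ x \in s, y \in s & index x s <= index y s].
Proof.
elim: s => // z s IH /andP[zs us]; rewrite upairs_cons mem_cat.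
case/orP=> [/mapP[y' Hy [-> ->]]|/(IH us)[xs ys ixy]].
  by rewrite mem_head Hy /= eqxx.
rewrite !inE xs ys !orbT /=.
by rewrite ![z == _]eq_sym (negbTE (memPn zs x xs)) (negbTE (memPn zs y ys)).
Qed.

Lemma upairs_swap s x y :
  uniq s -> Node x y \in upairs s -> Node y x \in upairs s -> x = y.
Proof.
move=> us /(upairs_index us)[xs ys i1] /(upairs_index us)[_ _ i2].
have Ei : index x s = index y s by apply/eqP; rewrite eqn_leq i1 i2.
by rewrite -(nth_index x xs) Ei nth_index.
Qed.

Lemma upairs_total s x y : x \in s -> y \in s ->
  Node x y \in upairs s \/ Node y x \in upairs s.
Proof.
elim: s => // z s IH; rewrite !upairs_cons !mem_cat !(in_cons z).
case/orP=> [/eqP->|xs]; case/orP=> [/eqP->|ys].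
- by left; rewrite map_f ?mem_head.
- by left; rewrite map_f // inE ys orbT.
- by right; rewrite map_f // inE xs orbT.
- by case: (IH xs ys) => H; [left|right]; rewrite H orbT.
Qed.

Lemma upairs_uniq s : uniq s -> uniq (upairs s).
Proof.
elim: s => // z s IH uzs; have /andP[zs us] := uzs.
rewrite upairs_cons cat_uniq IH // andbT map_inj_uniq ?uzs; last by move=> a b [].
apply/hasPn => u /upairsP[x [y [-> xs _]]].
by apply/mapP => -[w _ [xz _]]; move: zs; rewrite -xz xs.
Qed.

Lemma size_upairs s : size (upairs s) = size s * (size s).+1 %/ 2.
Proof.
have double : (size (upairs s)).*2 = size s * (size s).+1.
  by elim: s => // z s IH; rewrite upairs_cons size_cat size_map doubleD IH /=; lia.
by rewrite -double -muln2 mulnK.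
Qed.

Lemma flatten_map_uniq_tagged (A B : eqType) (F : A -> seq B) (tag : B -> A) s :
  uniq s -> {in s, forall a, uniq (F a)} ->
  {in s, forall a, {in F a, forall x, tag x = a}} ->
  uniq (flatten [seq F a | a <- s]).
Proof.
elim: s => //= a s IH /andP[as_ us] uF tagF.
rewrite cat_uniq uF ?mem_head // IH // => [||b bs]; last 2 first.
- by move=> b bs; apply: uF; rewrite inE bs orbT.
- by apply: tagF; rewrite inE bs orbT.
rewrite andbT; apply/hasPn => x /flatten_mapP[b bs xb]; apply/negP => xa.
have ab : a = b by rewrite -(tagF a (mem_head _ _) x xa) (tagF b _ x xb) // inE bs orbT.
by move: as_; rewrite ab bs.
Qed.

(* [catalog k] lists one tree of each isomorphism class with [k.+1] leaves:
   the left subtree is never larger than the right one, and two subtrees of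
   equal size are taken from [upairs].  [catalogs k] memoizes
   [catalog 0], ..., [catalog k]. *)
Definition cross_nodes (T : nat -> seq btree) (k : nat) : seq btree :=
  flatten [seq [seq Node x y | x <- T a, y <- T (k.-1 - a)] | a <- iota 0 k./2].

Definition catalog_step (T : nat -> seq btree) (k : nat) : seq btree :=
  cross_nodes T k ++ (if odd k then upairs (T k./2) else [::]).

Fixpoint catalogs (k : nat) : seq (seq btree) :=
  if k is k'.+1 then rcons (catalogs k') (catalog_step (nth [::] (catalogs k')) k)
  else [:: [:: Leaf]].

Definition catalog (k : nat) : seq btree := nth [::] (catalogs k) k.

Lemma size_catalogs k : size (catalogs k) = k.+1.
Proof. by elim: k => //= k IH; rewrite size_rcons IH. Qed.

Lemma nth_catalogs k j : j <= k -> nth [::] (catalogs k) j = catalog j.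
Proof.
elim: k => [|k IH]; first by rewrite leqn0 => /eqP->.
rewrite leq_eqVlt => /orP[/eqP->//|]; rewrite ltnS => jk.
by rewrite /= nth_rcons size_catalogs ltnS jk IH.
Qed.

Lemma catalog_rec k : 0 < k -> catalog k = catalog_step catalog k.
Proof.
case: k => // k _; rewrite /catalog /= nth_rcons size_catalogs ltnn eqxx.
have ext j : j <= k -> nth [::] (catalogs k) j = catalog j by apply: nth_catalogs.
rewrite /catalog_step /cross_nodes ext; last lia.
congr (flatten _ ++ _); apply/eq_in_map => a; rewrite mem_iota add0n => ha.
by rewrite !ext //; lia.
Qed.

Lemma mem_cross_nodes T k u : u \in cross_nodes T k <->
  exists a x y, [/\ a < k./2, x \in T a, y \in T (k.-1 - a) & u = Node x y].
Proof.
split.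
  case/flatten_mapP => a; rewrite mem_iota add0n => ha /allpairsP[[x y] /= [xT yT ->]].
  by exists a, x, y.
case=> a [x [y [ha xT yT ->]]]; apply/flatten_mapP; exists a; first by rewrite mem_iota.
by apply/allpairsP; exists (x, y).
Qed.

Lemma mem_catalog k u : 0 < k -> u \in catalog k ->
  (exists a x y, [/\ a < k./2, x \in catalog a, y \in catalog (k.-1 - a) & u = Node x y])
  \/ odd k /\ u \in upairs (catalog k./2).
Proof.
move=> k0; rewrite catalog_rec // mem_cat => /orP[/mem_cross_nodes|]; first by left.
by case: ifP => // ok; right.
Qed.

Lemma catalog_leaves k u : u \in catalog k -> leaves u = k.+1.
Proof.
elim/ltn_ind: k u => -[|k] IH u; first by rewrite inE => /eqP->.
have hk := odd_double_half k.+1.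
case/mem_catalog=> [//|[a [x [y [ha xT yT ->]]]]|[ok /upairsP[x [y [-> xT yT]]]]] /=.
  have := IH a ltac:(lia) x xT; have := IH (k.+1.-1 - a) ltac:(lia) y yT; lia.
rewrite ok in hk.
have := IH k.+1./2 ltac:(lia) x xT; have := IH k.+1./2 ltac:(lia) y yT; lia.
Qed.

Lemma catalog_uniq k : uniq (catalog k).
Proof.
elim/ltn_ind: k => -[//|k] IH; set K := k.+1; have hK := odd_double_half K.
rewrite catalog_rec // /catalog_step cat_uniq; apply/and3P; split.
- apply: (flatten_map_uniq_tagged (tag := fun u => if u is Node x _ then (leaves x).-1 else 0)).
  + exact: iota_uniq.
  + move=> a; rewrite mem_iota add0n => ha.
    by rewrite allpairs_uniq ?IH //; [lia | lia | move=> [? ?] [? ?] _ _ [-> ->]].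
  + move=> a _ _ /allpairsP[[x y] /= [xT _ ->]].
    by rewrite (catalog_leaves xT).
- apply/hasPn => u uP; apply/negP => /mem_cross_nodes[a [x [y [ha xT yT uxy]]]].
  case: ifP uP => // oK /upairsP[x' [y' [uxy' xT' yT']]].
  move: uxy'; rewrite uxy => -[Ex Ey]; subst x' y'.
  have := catalog_leaves xT; have := catalog_leaves xT'.
  have := catalog_leaves yT; have := catalog_leaves yT'; rewrite oK in hK; lia.
- by case: ifP => // _; apply/upairs_uniq/IH; lia.
Qed.

Lemma catalog_nodeP k x y : Node x y \in catalog k ->
  [/\ x \in catalog (leaves x).-1, y \in catalog (leaves y).-1,
      leaves x + leaves y = k.+1
    & leaves x < leaves y \/ Node x y \in upairs (catalog k./2)].
Proof.
move=> uT; have /= lxy := catalog_leaves uT.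
have k0 : 0 < k by have := leaves_gt0 x; have := leaves_gt0 y; lia.
have hk := odd_double_half k.
case: (mem_catalog k0 uT) => [[a [x1 [y1 [ha xT yT [Ex Ey]]]]]|[_ uP]].
  subst x1 y1.
  by rewrite (catalog_leaves xT) (catalog_leaves yT) /= in lxy *; split=> //; left; lia.
have [xT yT _] := upairs_index (catalog_uniq _) uP.
by rewrite (catalog_leaves xT) (catalog_leaves yT) /= in lxy *; split=> //; right.
Qed.

Lemma catalog_iso_eq k u v :
  u \in catalog k -> v \in catalog k -> btree_iso u v -> u = v.
Proof.
elim: u k v => [|x IHx y IHy] k [|x' y'] //= uT vT.
have [xT yT lxy ulxy] := catalog_nodeP uT.
have [xT' yT' lxy' vlxy] := catalog_nodeP vT.
case/orP=> /andP[ix iy]; have ex := btree_iso_leaves ix; have ey := btree_iso_leaves iy.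
  by rewrite (IHx _ x' xT) ?ex // (IHy _ y' yT) ?ey.
have uP : Node x y \in upairs (catalog k./2).
  case: ulxy => // lt; case: vlxy => [|/(upairs_index (catalog_uniq _))[]]; first lia.
  by move=> /catalog_leaves lx' /catalog_leaves ly' _; lia.
have vP : Node x' y' \in upairs (catalog k./2).
  have [/catalog_leaves lx /catalog_leaves ly _] := upairs_index (catalog_uniq _) uP.
  by case: vlxy => // lt; lia.
have exy' := IHx _ y' xT ltac:(by rewrite ex) ix.
have eyx' := IHy _ x' yT ltac:(by rewrite ey) iy.
subst y' x'; by rewrite (upairs_swap (catalog_uniq _) uP vP).
Qed.

Lemma node_catalog_lt a b x y :
  a < b -> x \in catalog a -> y \in catalog b -> Node x y \in catalog (a + b).+1.
Proof.
move=> ab xT yT; rewrite catalog_rec // mem_cat; apply/orP; left.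
apply/mem_cross_nodes; exists a, x, y; split => //; first lia.
by rewrite /= addKn.
Qed.

Lemma node_catalog_eq a x y : x \in catalog a -> y \in catalog a ->
  Node x y \in catalog (a + a).+1 \/ Node y x \in catalog (a + a).+1.
Proof.
move=> xT yT; rewrite catalog_rec // /catalog_step !mem_cat.
have -> : odd (a + a).+1 by rewrite /= addnn odd_double.
have -> : (a + a).+1./2 = a by lia.
by case: (upairs_total xT yT) => ->; rewrite orbT; [left|right].
Qed.

Lemma catalog_complete t : exists2 u, u \in catalog (leaves t).-1 & btree_iso t u.
Proof.
elim: t => [|l [x xT lx] r [y yT ry]]; first by exists Leaf; rewrite ?inE.
have -> : (leaves (Node l r)).-1 = ((leaves l).-1 + (leaves r).-1).+1.
  by have := leaves_gt0 l; have := leaves_gt0 r; rewrite /=; lia.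
have iso_xy : btree_iso (Node l r) (Node x y) by rewrite /= lx ry.
have iso_yx : btree_iso (Node l r) (Node y x) by rewrite /= lx ry orbT.
case: (ltngtP (leaves l).-1 (leaves r).-1) => [lt|gt|eq].
- by exists (Node x y); first exact: node_catalog_lt.
- by exists (Node y x); rewrite // addnC; exact: node_catalog_lt.
- rewrite -eq in yT *; case: (node_catalog_eq xT yT) => H.
    by exists (Node x y).
  by exists (Node y x).
Qed.

Lemma size_cross_nodes T k :
  size (cross_nodes T k) = \sum_(0 <= a < k./2) size (T a) * size (T (k.-1 - a)).
Proof.
rewrite /cross_nodes size_flatten /shape -map_comp sumnE big_map /index_iota subn0.
by apply: eq_bigr => a _; rewrite /= size_allpairs.
Qed.

Lemma size_catalog k : 0 < k -> size (catalog k) =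
  \sum_(0 <= a < k./2) size (catalog a) * size (catalog (k.-1 - a)) +
  (if odd k then size (catalog k./2) * (size (catalog k./2)).+1 %/ 2 else 0).
Proof.
by move=> k0; rewrite catalog_rec // size_cat size_cross_nodes; case: odd; rewrite ?size_upairs.
Qed.

Lemma size_catalog_odd i : size (catalog (2 * i + 1)) =
  size (catalog i) * (size (catalog i)).+1 %/ 2 +
  \sum_(0 <= j < i) size (catalog (2 * i + 1 - j - 1)) * size (catalog j).
Proof.
have half : (2 * i + 1)./2 = i by lia.
rewrite size_catalog ?addn1 // -addn1 half oddD oddM /= addnC.
by congr (_ + _); apply: eq_bigr => j _; rewrite mulnC; congr (size (catalog _) * _); lia.
Qed.

Lemma size_catalog_even i : 0 < i -> size (catalog (2 * i)) =
  \sum_(0 <= j < i) size (catalog (2 * i - j - 1)) * size (catalog j).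
Proof.
move=> i0; have half : (2 * i)./2 = i by lia.
rewrite size_catalog ?muln_gt0 // half oddM /= addn0.
by apply: eq_bigr => j _; rewrite mulnC; congr (size (catalog _) * _); lia.
Qed.

Lemma size_catalog123 : [/\ size (catalog 1) = 1, size (catalog 2) = 1 & size (catalog 3) = 2].
Proof. by []. Qed.

Import Order.TTheory GRing.Theory Num.Theory.
Local Open Scope ring_scope.

Section Ultrametric.
Variables (R : realType) (X : ultrametric R).
Local Notation d := (@um_dist R X).
Local Notation car := (um_carrier X).
Implicit Types (A B : {set car}) (x y z : car).

Lemma d_xx x : d x x = 0. Proof. exact/um_eq0. Qed.

Lemma d_eq0 x y : (d x y == 0) = (x == y).
Proof. by apply/eqP/eqP => [/um_eq0|->] //; rewrite d_xx. Qed.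

Lemma d_gt0 x y : x != y -> 0 < d x y.
Proof. by move=> nxy; rewrite lt_neqAle eq_sym d_eq0 nxy um_ge0. Qed.

Lemma diam_ge0 A : 0 <= diam A. Proof. exact: bigmax_ge_id. Qed.

Lemma diam_ub A x y : x \in A -> y \in A -> d x y <= diam A.
Proof.
by move=> xA yA; apply: (bigmax_sup x) => //; apply: (bigmax_sup y).
Qed.

Lemma diam_le A m : 0 <= m ->
  (forall x y, x \in A -> y \in A -> d x y <= m) -> diam A <= m.
Proof. by move=> m0 H; apply: bigmax_le => // x xA; apply: bigmax_le => // y; apply: H. Qed.

Lemma diam_attained A x0 : x0 \in A ->
  exists x y, [/\ x \in A, y \in A & diam A = d x y].
Proof.
move=> x0A; rewrite /diam.
have [x xA ->] := eq_bigmax x0 (fun x => x \in A) (fun x => \big[Num.max/0]_(y in A) d x y) x0A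
  (fun x _ => bigmax_ge_id _ _ _ _).
have [y yA ->] := eq_bigmax x0 (fun x => x \in A) (d x) x0A (fun y _ => um_ge0 x y).
by exists x, y.
Qed.

Lemma diam_eq A m x0 y0 : (forall x y, x \in A -> y \in A -> d x y <= m) ->
  x0 \in A -> y0 \in A -> d x0 y0 = m -> diam A = m.
Proof.
move=> le_m x0A y0A dxy; apply/eqP; rewrite eq_le diam_le //=.
  by rewrite -dxy diam_ub.
by rewrite -dxy um_ge0.
Qed.

Definition subspectrum A : seq R := undup [seq d p.1 p.2 | p <- enum
  [pred p : (car * car)%type | [&& p.1 \in A, p.2 \in A & p.1 != p.2]]].

Lemma subspectrum_uniq A : uniq (subspectrum A). Proof. exact: undup_uniq. Qed.

Lemma mem_subspectrum A v :
  v \in subspectrum A <-> exists x y, [/\ x \in A, y \in A, x != y & v = d x y].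
Proof.
rewrite mem_undup; split.
  by case/mapP => -[x y]; rewrite mem_enum => /and3P[xA yA nxy] ->; exists x, y.
case=> x [y [xA yA nxy ->]]; apply/mapP; exists (x, y) => //.
by rewrite mem_enum inE /= xA yA nxy.
Qed.

Lemma subspectrum_gt0 A v : v \in subspectrum A -> 0 < v.
Proof. by case/mem_subspectrum => x [y [_ _ nxy ->]]; exact: d_gt0. Qed.

Lemma subspectrum_le_diam A v : v \in subspectrum A -> v <= diam A.
Proof. by case/mem_subspectrum => x [y [xA yA _ ->]]; exact: diam_ub. Qed.

Lemma spectrumE : spectrum X = subspectrum [set: car].
Proof. by rewrite /spectrum /subspectrum; congr (undup (map _ _)); apply: eq_enum => p; rewrite !inE. Qed.

Lemma subspectrum_small A : (#|A| <= 1)%N -> subspectrum A = [::].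
Proof.
case: (subspectrum A) (mem_subspectrum A) => // v s /(_ v).
rewrite mem_head => /iffLR[]// x [y [xA yA + _]] /card_le1_eqP A1.
by rewrite (A1 x y xA yA) eqxx.
Qed.

Definition diam_class A x := [set y in A | d x y < diam A].

Lemma um_classesE A : um_classes A = [set diam_class A x | x in A].
Proof. by []. Qed.

Section DiamClasses.
Variable A : {set car}.
Hypothesis A_gt1 : (1 < #|A|)%N.

Lemma diam_gt0 : 0 < diam A.
Proof.
have [x [y [xA yA nxy]]] := card_gt1P A_gt1.
exact: lt_le_trans (d_gt0 nxy) (diam_ub xA yA).
Qed.

(* Below the diameter, the ultrametric inequality makes closeness transitive. *)
Lemma diam_class_equiv : {in A & &, equivalence_rel (fun x y => d x y < diam A)}.
Proof.
move=> x y z _ _ _; split; first by rewrite d_xx diam_gt0.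
move=> dxy; apply/idP/idP => [dxz|dyz].
- by apply: le_lt_trans (um_ultra y x z) _; rewrite gt_max um_sym dxy.
- by apply: le_lt_trans (um_ultra x y z) _; rewrite gt_max dxy.
Qed.

Lemma card_um_classes_sum : #|A| = (\sum_(B in um_classes A) #|B|)%N.
Proof. exact/card_partition/(equivalence_partitionP diam_class_equiv). Qed.

Lemma mem_diam_class x : x \in A -> x \in diam_class A x.
Proof. by move=> xA; rewrite inE xA d_xx diam_gt0. Qed.

Lemma diam_class_in x : x \in A -> diam_class A x \in um_classes A.
Proof. exact: imset_f. Qed.

Lemma diam_class_far x y :
  x \in A -> y \in A -> y \notin diam_class A x -> d x y = diam A.
Proof.
by move=> xA yA; rewrite inE yA -leNgt => le_dxy; apply/eqP; rewrite eq_le le_dxy diam_ub.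
Qed.

Lemma card_um_classes_gt1 : (1 < #|um_classes A|)%N.
Proof.
have [x0 [_ [x0A _ _]]] := card_gt1P A_gt1.
have [x [y [xA yA dxy]]] := diam_attained x0A.
apply/card_gt1P; exists (diam_class A x), (diam_class A y).
split; try exact: diam_class_in.
by apply/eqP => Exy; have := mem_diam_class yA; rewrite -Exy inE yA -dxy ltxx.
Qed.

Lemma card_um_class B : B \in um_classes A -> (0 < #|B| < #|A|)%N.
Proof.
case/imsetP => x xA ->; rewrite -/(diam_class A x); apply/andP; split.
  by apply/card_gt0P; exists x; exact: mem_diam_class.
apply: proper_card; rewrite properE; apply/andP; split.
  by apply/subsetP => y; rewrite !inE => /andP[].
have [x0 [_ [x0A _ _]]] := card_gt1P A_gt1.
have [u [v [uA vA duv]]] := diam_attained x0A.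
apply/negP => /subsetP sub; have := sub _ uA; have := sub _ vA.
rewrite !inE uA vA /= => dxv dxu.
by have := um_ultra u x v; rewrite -duv leNgt gt_max um_sym dxu dxv.
Qed.

Lemma subspectrum_sub_classes : {subset subspectrum A <=
  diam A :: flatten [seq subspectrum B | B <- enum (um_classes A)]}.
Proof.
move=> v /mem_subspectrum[x [y [xA yA nxy ->]]]; rewrite inE.
case: (boolP (y \in diam_class A x)) => [yx|/(diam_class_far xA yA)->]; last by rewrite eqxx.
apply/orP; right; apply/flatten_mapP; exists (diam_class A x).
  by rewrite mem_enum diam_class_in.
by apply/mem_subspectrum; exists x, y; split => //; exact: mem_diam_class.
Qed.

Lemma size_subspectrum_classes :
  (size (subspectrum A) <= (\sum_(B in um_classes A) size (subspectrum B)).+1)%N.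
Proof.
have := uniq_leq_size (subspectrum_uniq A) subspectrum_sub_classes.
by rewrite /= size_flatten /shape -map_comp sumnE big_map big_enum.
Qed.
End DiamClasses.

Lemma size_subspectrum_lt A : (0 < #|A|)%N -> (size (subspectrum A) < #|A|)%N.
Proof.
move: {2}#|A| (leqnn #|A|) => n; elim: n A => [|n IH] A An A0; first lia.
have [A_le1|A_gt1] := leqP #|A| 1; first by rewrite subspectrum_small.
have sub_lt B : B \in um_classes A -> (size (subspectrum B) < #|B|)%N.
  by move=> BA; have /andP[B0 BA_lt] := card_um_class A_gt1 BA; apply: IH B0; lia.
have := size_subspectrum_classes A_gt1; have := card_um_classes_gt1 A_gt1.
rewrite (card_um_classes_sum A_gt1) => cl_gt1 le_sum.
suff : (\sum_(B in um_classes A) size (subspectrum B) + #|um_classes A| <=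
        \sum_(B in um_classes A) #|B|)%N by lia.
by rewrite -sum1_card -big_split; apply: leq_sum => B BA /=; rewrite addn1 sub_lt.
Qed.

Definition tight A := size (subspectrum A) = #|A|.-1.

Lemma tight_um_classes A : (1 < #|A|)%N -> tight A ->
  #|um_classes A| = 2 /\ {in um_classes A, forall B, tight B}.
Proof.
move=> A_gt1 tA.
have sub_lt B : B \in um_classes A -> (size (subspectrum B) < #|B|)%N.
  by move=> BA; apply: size_subspectrum_lt; case/andP: (card_um_class A_gt1 BA).
have [le_sum eq_sum] := leqif_sum (fun B BA => leqif_eq (sub_lt B BA)).
have sum_succ : (\sum_(B in um_classes A) (size (subspectrum B)).+1 =
                 \sum_(B in um_classes A) size (subspectrum B) + #|um_classes A|)%N.
  by rewrite -sum1_card -big_split; apply: eq_bigr => B _ /=; rewrite addn1.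
rewrite -(card_um_classes_sum A_gt1) sum_succ in le_sum eq_sum.
have := size_subspectrum_classes A_gt1; have := card_um_classes_gt1 A_gt1.
rewrite /tight in tA => cl_gt1 le_s; split; first lia.
have /forall_inP eq_classes : [forall (B | B \in um_classes A), (size (subspectrum B)).+1 == #|B|].
  by rewrite -eq_sum; apply/eqP; lia.
by move=> B BA; rewrite /tight -(eqP (eq_classes B BA)).
Qed.

(* \overline T_A as a binary tree; it is faithful when [A] is tight, since
   every inner node then has exactly two children. *)
Fixpoint rep_btree_fuel (n : nat) (A : {set car}) : btree :=
  if n is n'.+1 then
    if (#|A| <= 1)%N then Leaf else
      if enum (um_classes A) is [:: B1; B2] then
        Node (rep_btree_fuel n' B1) (rep_btree_fuel n' B2)
      else Leaf
  else Leaf.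

Lemma enum_um_classes2 A : #|um_classes A| = 2 -> exists B1 B2,
  [/\ enum (um_classes A) = [:: B1; B2], B1 \in um_classes A & B2 \in um_classes A].
Proof.
rewrite cardE; case E: (enum _) => [|B1 [|B2 [|? ?]]] // _.
by exists B1, B2; split; rewrite // -mem_enum E !inE eqxx ?orbT.
Qed.

Lemma card_um_classes2 A B1 B2 : (1 < #|A|)%N ->
  enum (um_classes A) = [:: B1; B2] -> #|A| = (#|B1| + #|B2|)%N.
Proof.
move=> A_gt1 E; rewrite (card_um_classes_sum A_gt1) -big_enum E.
by rewrite !big_cons big_nil /= addn0.
Qed.

Lemma rep_tree_fuel_tight n A : (0 < #|A|)%N -> (#|A| <= n)%N -> tight A ->
  rep_tree_fuel n A = rtree_of_btree (rep_btree_fuel n A) /\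
  leaves (rep_btree_fuel n A) = #|A|.
Proof.
elim: n A => [|n IH] A A0 An tA /=; first lia.
have [A_le1|A_gt1] := leqP #|A| 1; first by split => //=; lia.
have [cl2 tB] := tight_um_classes A_gt1 tA.
have [B1 [B2 [E B1A B2A]]] := enum_um_classes2 cl2.
have /andP[B10 B1_lt] := card_um_class A_gt1 B1A.
have /andP[B20 B2_lt] := card_um_class A_gt1 B2A.
have [r1 l1] := IH B1 B10 ltac:(lia) (tB _ B1A).
have [r2 l2] := IH B2 B20 ltac:(lia) (tB _ B2A).
by rewrite E /= r1 r2 l1 l2 (card_um_classes2 A_gt1 E).
Qed.

Lemma rep_btree_fuel_enough n m A : (#|A| <= n)%N -> (#|A| <= m)%N ->
  rep_btree_fuel n A = rep_btree_fuel m A.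
Proof.
elim: n m A => [|n IH] [|m] A An Am //=; try by rewrite ifT //; lia.
case: leqP => // A_gt1; case E: (enum (um_classes A)) => [|B1 [|B2 [|? ?]]] //.
have B1A : B1 \in um_classes A by rewrite -mem_enum E mem_head.
have B2A : B2 \in um_classes A by rewrite -mem_enum E !inE eqxx orbT.
have /andP[_ B1_lt] := card_um_class A_gt1 B1A.
have /andP[_ B2_lt] := card_um_class A_gt1 B2A.
by rewrite (IH m B1) ?(IH m B2) //; lia.
Qed.
End Ultrametric.

Definition rep_btree (R : realType) (X : ultrametric R) : btree :=
  rep_btree_fuel #|um_carrier X| [set: um_carrier X].

Lemma enum_set2 (T : finType) (a b : T) : a != b ->
  enum [set a; b] = [:: a; b] \/ enum [set a; b] = [:: b; a].
Proof.
move=> ab; have := enum_uniq [set a; b].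
have : size (enum [set a; b]) = 2 by rewrite -cardE cards2 ab.
have mem2 x : x \in enum [set a; b] -> x = a \/ x = b.
  by rewrite mem_enum !inE => /orP[]/eqP; [left|right].
case E: (enum _) mem2 => [|c [|e [|? ?]]] mem2 // _ /andP[ce _].
have [] : (c = a \/ c = b) /\ (e = a \/ e = b).
  by split; apply: mem2; rewrite !inE eqxx ?orbT.
by case=> ? [] ?; subst; rewrite ?mem_seq1 ?eqxx in ce; [|left|right|].
Qed.

Lemma set_enum2 (T : finType) (S : {set T}) a b : enum S = [:: a; b] -> S = [set a; b].
Proof. by move=> E; rewrite -(set_enum S) E; apply/setP => x; rewrite !inE. Qed.

Lemma nneg_mono_le (R : realType) (g : R -> R) :
  {in Num.nneg &, {mono g : u v / u < v}} -> {in Num.nneg &, {mono g : u v / u <= v}}.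
Proof. by move=> g_lt u v u0 v0; rewrite !leNgt g_lt. Qed.

Section MonotoneMap.
Variables (R : realType) (X Y : ultrametric R).
Variables (h : um_carrier X -> um_carrier Y) (g : R -> R).
Hypothesis g0 : g 0 = 0.
Hypothesis g_lt : {in Num.nneg &, {mono g : u v / u < v}}.
Hypothesis dist_h : forall a b, um_dist (h a) (h b) = g (um_dist a b).
Let g_le := nneg_mono_le g_lt.

Lemma mono_map_inj : injective h.
Proof.
move=> a b hab; apply/eqP; rewrite -d_eq0 eq_le um_ge0 andbT.
by rewrite -g_le ?nnegrE ?um_ge0 // g0 -dist_h hab d_xx.
Qed.

Lemma diam_imset (A : {set um_carrier X}) : diam (h @: A) = g (diam A).
Proof.
have [->|[x0 x0A]] := set_0Vmem A.
  have diam0 (Z : ultrametric R) : diam (@set0 (um_carrier Z)) = 0.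
    by apply/le_anti; rewrite diam_ge0 diam_le // => x y; rewrite inE.
  by rewrite imset0 !diam0 g0.
have [x [y [xA yA dxy]]] := diam_attained x0A.
apply: (diam_eq (x0 := h x) (y0 := h y)); rewrite ?imset_f ?dist_h -?dxy //.
move=> _ _ /imsetP[u uA ->] /imsetP[v vA ->].
by rewrite dist_h g_le ?nnegrE ?um_ge0 ?diam_ge0 ?diam_ub.
Qed.

Lemma diam_class_imset (A : {set um_carrier X}) x : x \in A ->
  diam_class (h @: A) (h x) = h @: diam_class A x.
Proof.
move=> xA; apply/setP => z; rewrite inE diam_imset; apply/andP/imsetP.
  case=> /imsetP[y yA ->]; rewrite dist_h g_lt ?nnegrE ?um_ge0 ?diam_ge0 // => dxy.
  by exists y => //; rewrite inE yA.
case=> y; rewrite inE => /andP[yA dxy] ->; split; first exact: imset_f.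
by rewrite dist_h g_lt ?nnegrE ?um_ge0 ?diam_ge0.
Qed.

Lemma um_classes_imset (A : {set um_carrier X}) :
  um_classes (h @: A) = [set h @: B | B : {set um_carrier X} in um_classes A].
Proof.
rewrite !um_classesE -!imset_comp; apply: eq_in_imset => x xA /=.
exact: diam_class_imset.
Qed.

Lemma rep_btree_fuel_imset n (A : {set um_carrier X}) :
  btree_iso (rep_btree_fuel n (h @: A)) (rep_btree_fuel n A).
Proof.
elim: n A => [|n IH] A //=; rewrite card_imset; last exact: mono_map_inj.
case: leqP => // _; rewrite um_classes_imset.
have F_inj : injective (fun B : {set um_carrier X} => h @: B).
  exact/imset_inj/mono_map_inj.
have := card_imset (um_classes A) F_inj; rewrite !cardE.
case E: (enum (um_classes A)) => [|B1 [|B2 [|? ?]]];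
  try by case: (enum (_ @: _)) => [|? [|? [|? ?]]].
move=> _; have B12 : B1 != B2 by have := enum_uniq (um_classes A); rewrite E /= inE andbT.
rewrite (set_enum2 E) imsetU1 imset_set1.
have hB12 : h @: B1 != h @: B2 by rewrite (inj_eq F_inj).
by case: (enum_set2 hB12) => -> /=; rewrite !IH ?orbT.
Qed.
End MonotoneMap.

Section Glue.
Variable R : realType.

Definition um_diam (X : ultrametric R) := diam [set: um_carrier X].

Lemma um_diam_ge0 X : 0 <= um_diam X. Proof. exact: diam_ge0. Qed.

Lemma dist_le_um_diam X (a b : um_carrier X) : um_dist a b <= um_diam X.
Proof. by apply: diam_ub; rewrite inE. Qed.

Definition shift_dist (c v : R) := if v == 0 then 0 else v + c.

Lemma shift_dist0 c : shift_dist c 0 = 0. Proof. by rewrite /shift_dist eqxx. Qed.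

Lemma shift_dist_gt0 c v : 0 < v -> shift_dist c v = v + c.
Proof. by move=> v0; rewrite /shift_dist gt_eqF. Qed.

Section Shift.
Variable c : R.
Hypothesis c_ge0 : 0 <= c.

Lemma shift_dist_ge0 v : 0 <= v -> 0 <= shift_dist c v.
Proof. by rewrite /shift_dist; case: ifP => // _ v0; rewrite addr_ge0. Qed.

Lemma shift_dist_eq0 v : 0 <= v -> (shift_dist c v == 0) = (v == 0).
Proof.
rewrite le0r => /orP[/eqP->|v0]; first by rewrite shift_dist0 eqxx.
by rewrite shift_dist_gt0 // !gt_eqF // ltr_wpDr.
Qed.

Lemma shift_dist_lt : {in Num.nneg &, {mono shift_dist c : u v / u < v}}.
Proof.
move=> u v; rewrite !nnegrE !le0r => /orP[/eqP->|u0] /orP[/eqP->|v0];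
  rewrite ?shift_dist0 ?shift_dist_gt0 ?ltxx ?ltrD2r //.
- by rewrite v0 ltr_wpDr.
- by rewrite !ltNge ?ltW // ltr_wpDr.
Qed.
End Shift.

(* The points of [Y] are moved [um_diam X + 1] further apart, so that the
   two parts have disjoint spectra, both below the distance between the parts. *)
Section GlueSpace.
Variables X Y : ultrametric R.
Let c := um_diam X + 1.
Let D := um_diam X + um_diam Y + 2.

Lemma glue_shift_ge0 : 0 <= c. Proof. by rewrite addr_ge0 ?um_diam_ge0. Qed.

Definition glue_dist (u v : (um_carrier X + um_carrier Y)%type) : R :=
  match u, v with
  | inl a, inl b => um_dist a b
  | inr a, inr b => shift_dist c (um_dist a b)
  | _, _ => D
  end.

Lemma glue_dist_inl_lt (a b : um_carrier X) : um_dist a b < D.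
Proof. have := dist_le_um_diam a b; have := um_diam_ge0 Y; rewrite /D; lra. Qed.

Lemma glue_dist_inr_lt (a b : um_carrier Y) : shift_dist c (um_dist a b) < D.
Proof.
have := dist_le_um_diam a b; have := um_diam_ge0 X; have := um_ge0 a b.
by rewrite /shift_dist /D /c; case: ifP => _; lra.
Qed.

Lemma glue_dist_ge0 u v : 0 <= glue_dist u v.
Proof.
have D_ge0 : 0 <= D by rewrite /D; have := um_diam_ge0 X; have := um_diam_ge0 Y; lra.
by case: u v => a [] b //=; rewrite ?um_ge0 ?shift_dist_ge0 ?glue_shift_ge0 ?um_ge0.
Qed.

Lemma glue_dist_eq0 u v : glue_dist u v = 0 <-> u = v.
Proof.
split; last by move=> ->; case: v => a /=; rewrite d_xx ?shift_dist0.
have D_gt0 : 0 < D by rewrite /D; have := um_diam_ge0 X; have := um_diam_ge0 Y; lra.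
case: u v => a [] b /= => [/um_eq0->| | |] //; try by move=> D0; rewrite D0 ltxx in D_gt0.
by move/eqP; rewrite shift_dist_eq0 ?glue_shift_ge0 ?um_ge0 // d_eq0 => /eqP->.
Qed.

Lemma glue_dist_sym u v : glue_dist u v = glue_dist v u.
Proof. by case: u v => a [] b //=; rewrite um_sym. Qed.

Lemma glue_dist_ultra u v w :
  glue_dist u w <= Num.max (glue_dist u v) (glue_dist v w).
Proof.
have inlD := glue_dist_inl_lt; have inrD := glue_dist_inr_lt.
case: u v w => a [] b [] e /=; rewrite ?le_max ?lexx ?orbT //; try by rewrite ltW.
- by rewrite -le_max um_ultra.
- rewrite !(nneg_mono_le (shift_dist_lt glue_shift_ge0)) ?nnegrE ?um_ge0 //.
  by rewrite -le_max um_ultra.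
Qed.

Definition glue : ultrametric R := Ultrametric glue_dist_ge0 glue_dist_eq0
  glue_dist_sym glue_dist_ultra.

Variables (x0 : um_carrier X) (y0 : um_carrier Y).
Local Notation Z := glue.

Lemma card_glue : #|um_carrier Z| = (#|um_carrier X| + #|um_carrier Y|)%N.
Proof. exact: card_sum. Qed.

Lemma diam_glue : diam [set: um_carrier Z] = D.
Proof.
apply: (diam_eq (x0 := inl x0 : um_carrier Z) (y0 := inr y0)) => // -[a|a] [b|b] _ _ //=.
- exact/ltW/glue_dist_inl_lt.
- exact/ltW/glue_dist_inr_lt.
Qed.

Lemma diam_class_glue_inl a :
  diam_class [set: um_carrier Z] (inl a) = inl @: [set: um_carrier X].
Proof.
apply/setP => -[b|b]; rewrite !inE diam_glue /=.
  by rewrite glue_dist_inl_lt imset_f ?inE.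
by rewrite ltxx; apply/esym/negbTE/imsetP => -[].
Qed.

Lemma diam_class_glue_inr a :
  diam_class [set: um_carrier Z] (inr a) = inr @: [set: um_carrier Y].
Proof.
apply/setP => -[b|b]; rewrite !inE diam_glue /=.
  by rewrite ltxx; apply/esym/negbTE/imsetP => -[].
by rewrite glue_dist_inr_lt imset_f ?inE.
Qed.

Lemma um_classes_glue : um_classes [set: um_carrier Z] =
  [set inl @: [set: um_carrier X]; inr @: [set: um_carrier Y]].
Proof.
apply/setP => B; rewrite um_classesE !inE; apply/imsetP/orP.
  by case=> -[a|a] _ ->; [left; rewrite diam_class_glue_inl | right; rewrite diam_class_glue_inr].
case=> /eqP->; [exists (inl x0); rewrite ?diam_class_glue_inl | exists (inr y0);
  rewrite ?diam_class_glue_inr]; by rewrite ?inE.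
Qed.

Lemma rep_btree_glue :
  btree_iso (rep_btree Z) (Node (rep_btree X) (rep_btree Y)).
Proof.
have X0 : (0 < #|um_carrier X|)%N by apply/card_gt0P; exists x0.
have Y0 : (0 < #|um_carrier Y|)%N by apply/card_gt0P; exists y0.
rewrite /rep_btree card_glue; case E: (_ + _)%N => [|n] /=; first lia.
rewrite ifN; last by rewrite -ltnNge cardsT card_glue; lia.
have LR : inl @: [set: um_carrier X] != inr @: [set: um_carrier Y] :> {set um_carrier Z}.
  by apply/eqP => /setP/(_ (inl x0)); rewrite imset_f ?inE // => /esym/imsetP[].
have iso_l : btree_iso (rep_btree_fuel n (inl @: [set: um_carrier X] : {set um_carrier Z}))
                       (rep_btree_fuel #|um_carrier X| [set: um_carrier X]).
  apply: btree_iso_trans (rep_btree_fuel_imset (Y := Z) (h := inl) (g := id)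
    (erefl 0) (fun _ _ _ _ => erefl) (fun _ _ => erefl) n _) _.
  by rewrite (rep_btree_fuel_enough (m := #|um_carrier X|)) ?btree_iso_refl ?cardsT //; lia.
have iso_r : btree_iso (rep_btree_fuel n (inr @: [set: um_carrier Y] : {set um_carrier Z}))
                       (rep_btree_fuel #|um_carrier Y| [set: um_carrier Y]).
  apply: btree_iso_trans (rep_btree_fuel_imset (Y := Z) (h := inr) (shift_dist0 c)
    (shift_dist_lt glue_shift_ge0) (fun _ _ => erefl) n _) _.
  by rewrite (rep_btree_fuel_enough (m := #|um_carrier Y|)) ?btree_iso_refl ?cardsT //; lia.
by rewrite um_classes_glue; case: (enum_set2 LR) => -> /=; rewrite iso_l iso_r ?orbT.
Qed.

Lemma glue_spectrum_uniq : uniq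
  (D :: subspectrum [set: um_carrier X] ++ map (shift_dist c) (subspectrum [set: um_carrier Y])).
Proof.
have le_X v : v \in subspectrum [set: um_carrier X] -> v <= um_diam X.
  exact: subspectrum_le_diam.
have le_Y v : v \in subspectrum [set: um_carrier Y] -> v <= um_diam Y.
  exact: subspectrum_le_diam.
have := um_diam_ge0 X; have := um_diam_ge0 Y; rewrite /D /c => dX dY.
rewrite cons_uniq mem_cat cat_uniq subspectrum_uniq /=; apply/and3P; split.
- apply/norP; split; apply/negP; first by move/le_X; lra.
  by case/mapP => w /[dup] /subspectrum_gt0 w0 /le_Y le_w; rewrite shift_dist_gt0 // => ?; lra.
- apply/hasPn => _ /mapP[w /[dup] /subspectrum_gt0 w0 /le_Y le_w ->].
  by rewrite shift_dist_gt0 //; apply/negP => /le_X; lra.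
- rewrite map_inj_in_uniq ?subspectrum_uniq // => u w /subspectrum_gt0 u0 /subspectrum_gt0 w0.
  by rewrite !shift_dist_gt0 // => /addIr.
Qed.

Lemma glue_spectrum_sub : {subset
  D :: subspectrum [set: um_carrier X] ++ map (shift_dist c) (subspectrum [set: um_carrier Y])
  <= subspectrum [set: um_carrier Z]}.
Proof.
move=> v; rewrite inE mem_cat => /orP[/eqP->|/orP[]].
- by apply/mem_subspectrum; exists (inl x0), (inr y0).
- by case/mem_subspectrum => a [b [_ _ ab ->]]; apply/mem_subspectrum; exists (inl a), (inl b).
- case/mapP => _ /mem_subspectrum[a [b [_ _ ab ->]]] ->; apply/mem_subspectrum.
  by exists (inr a), (inr b).
Qed.

Lemma tight_glue : tight [set: um_carrier X] -> tight [set: um_carrier Y] ->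
  tight [set: um_carrier Z].
Proof.
rewrite /tight !cardsT card_glue => tX tY.
have X0 : (0 < #|um_carrier X|)%N by apply/card_gt0P; exists x0.
have Y0 : (0 < #|um_carrier Y|)%N by apply/card_gt0P; exists y0.
have := size_subspectrum_lt (A := [set: um_carrier Z]).
rewrite cardsT card_glue addn_gt0 X0 => /(_ isT).
have := uniq_leq_size glue_spectrum_uniq glue_spectrum_sub.
rewrite /= size_cat size_map tX tY.
by move: (size _) #|um_carrier X| #|um_carrier Y| => s nX nY; lia.
Qed.
End GlueSpace.
End Glue.

Section Realization.
Variable R : realType.

Lemma unit_dist_eq0 (x y : unit) : (0 : R) = 0 <-> x = y.
Proof. by case: x; case: y. Qed.

Lemma unit_dist_ultra (x y z : unit) : (0 : R) <= Num.max 0 0.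
Proof. by rewrite maxxx. Qed.

Definition point_space : ultrametric R :=
  Ultrametric (fun _ _ : unit => lexx (0 : R)) unit_dist_eq0 (fun _ _ => erefl) unit_dist_ultra.

Fixpoint space_of (t : btree) : ultrametric R :=
  if t is Node l r then glue (space_of l) (space_of r) else point_space.

Lemma space_ofP t : [/\ #|um_carrier (space_of t)| = leaves t,
  tight [set: um_carrier (space_of t)] & btree_iso (rep_btree (space_of t)) t].
Proof.
elim: t => [|l [cl tl il] r [cr tr ir]].
  have c1 : #|um_carrier (space_of Leaf)| = 1%N by rewrite /= card_unit.
  have c1' : #|[set: um_carrier (space_of Leaf)]| = 1%N by rewrite cardsT.
  split => //; first by rewrite /tight c1' subspectrum_small ?c1'.
  by rewrite /rep_btree c1 [rep_btree_fuel _ _]/= c1'.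
have /card_gt0P[x0 _] : (0 < #|um_carrier (space_of l)|)%N by rewrite cl leaves_gt0.
have /card_gt0P[y0 _] : (0 < #|um_carrier (space_of r)|)%N by rewrite cr leaves_gt0.
split; first by rewrite /= card_glue cl cr.
  exact: tight_glue x0 y0 tl tr.
by apply: btree_iso_trans (rep_btree_glue x0 y0) _; rewrite /= il ir.
Qed.

Lemma in_U_tight (X : ultrametric R) : in_U X <-> tight [set: um_carrier X].
Proof. by rewrite /in_U /tight spectrumE cardsT subn1. Qed.

Lemma rep_tree_U (X : ultrametric R) : in_U X -> (0 < #|um_carrier X|)%N ->
  rep_tree X = rtree_of_btree (rep_btree X) /\ leaves (rep_btree X) = #|um_carrier X|.
Proof.
move=> /in_U_tight tX X0; have := rep_tree_fuel_tight (n := #|um_carrier X|) _ _ tX.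
by rewrite cardsT; apply.
Qed.

Lemma um_cong_U (X Y : ultrametric R) : in_U X -> in_U Y ->
  (0 < #|um_carrier X|)%N -> (0 < #|um_carrier Y|)%N ->
  um_cong X Y <-> btree_iso (rep_btree X) (rep_btree Y).
Proof.
move=> UX UY X0 Y0; rewrite /um_cong (proj1 (rep_tree_U UX X0)) (proj1 (rep_tree_U UY Y0)).
exact: rtree_iso_btree.
Qed.
End Realization.

Section Transversal.
Variables (T : Type) (P : T -> Prop) (r : T -> T -> Prop).
Hypothesis r_sym : forall x y, P x -> P y -> r x y -> r y x.
Hypothesis r_trans : forall x y z, P x -> P y -> P z -> r x y -> r y z -> r x z.

Definition transversal n (f : 'I_n -> T) : Prop :=
  [/\ forall i, P (f i), forall i j, r (f i) (f j) -> i = j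
    & forall x, P x -> exists i, r x (f i)].

Lemma transversal_leq n m (f : 'I_n -> T) (g : 'I_m -> T) :
  transversal f -> transversal g -> (n <= m)%N.
Proof.
case=> Pf f_inj _ [Pg _ g_cov]; have [phi phiP] := choice (fun i => g_cov _ (Pf i)).
have phi_inj : injective phi.
  move=> i j phi_ij; apply: f_inj; apply: (r_trans (Pf i) (Pg (phi i)) (Pf j) (phiP i)).
  by rewrite phi_ij; apply: r_sym (phiP j).
by have := leq_card phi phi_inj; rewrite !card_ord.
Qed.

Lemma transversal_unique n m (f : 'I_n -> T) (g : 'I_m -> T) :
  transversal f -> transversal g -> n = m.
Proof. by move=> tf tg; apply/eqP; rewrite eqn_leq !(transversal_leq tf tg, transversal_leq tg tf). Qed.
End Transversal.

Section Counting.
Variables (R : realType) (k : nat).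

Definition U_points (X : ultrametric R) := in_U X /\ #|um_carrier X| = k.+1.

Lemma num_classes_U_transversal n :
  num_classes_U R k n <-> exists f, @transversal _ U_points (@um_cong R) n f.
Proof.
split=> -[f].
  by case=> Pf [f_inj f_cov]; exists f; split=> // X [UX cX]; apply: f_cov.
by case=> Pf f_inj f_cov; exists f; split=> //; split=> // X UX cX; apply: f_cov.
Qed.

Lemma um_cong_U_points (X Y : ultrametric R) : U_points X -> U_points Y ->
  um_cong X Y <-> btree_iso (rep_btree X) (rep_btree Y).
Proof. by move=> [UX cX] [UY cY]; apply: um_cong_U; rewrite ?cX ?cY. Qed.

Lemma um_cong_sym X Y : U_points X -> U_points Y -> um_cong X Y -> um_cong Y X.
Proof. by move=> PX PY; rewrite !um_cong_U_points // btree_iso_sym. Qed.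

Lemma um_cong_trans X Y Z : U_points X -> U_points Y -> U_points Z ->
  um_cong X Y -> um_cong Y Z -> um_cong X Z.
Proof. by move=> PX PY PZ; rewrite !um_cong_U_points //; apply: btree_iso_trans. Qed.

Definition catalog_spaces (i : 'I_(size (catalog k))) : ultrametric R :=
  space_of R (nth Leaf (catalog k) i).

Lemma catalog_spacesP i : U_points (catalog_spaces i) /\
  btree_iso (rep_btree (catalog_spaces i)) (nth Leaf (catalog k) i).
Proof.
have [card_t tight_t iso_t] := space_ofP R (nth Leaf (catalog k) i).
by split=> //; split; [exact/in_U_tight | rewrite card_t (catalog_leaves (mem_nth _ _))].
Qed.

Lemma transversal_catalog : transversal U_points (@um_cong R) catalog_spaces.
Proof.
split=> [i | i j | X PX]; first by case: (catalog_spacesP i).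
  have [Pi isoi] := catalog_spacesP i; have [Pj isoj] := catalog_spacesP j.
  move/(um_cong_U_points Pi Pj) => iso_ij; apply/val_inj/eqP.
  rewrite -(nth_uniq Leaf (ltn_ord i) (ltn_ord j) (catalog_uniq k)); apply/eqP.
  apply: (catalog_iso_eq (mem_nth Leaf (ltn_ord i)) (mem_nth Leaf (ltn_ord j))).
  rewrite btree_iso_sym in isoi.
  exact: btree_iso_trans isoi (btree_iso_trans iso_ij isoj).
have [UX cX] := PX.
have [_ lX] := rep_tree_U UX (ltac:(by rewrite cX)).
have [u uT iso_u] := catalog_complete (rep_btree X); rewrite lX cX /= in uT.
have ui : (index u (catalog k) < size (catalog k))%N by rewrite index_mem.
exists (Ordinal ui); have [Pu iso_su] := catalog_spacesP (Ordinal ui).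
apply/(um_cong_U_points PX Pu); apply: btree_iso_trans iso_u _.
by rewrite btree_iso_sym /= nth_index in iso_su *.
Qed.

Lemma B_catalog : B R k = size (catalog k).
Proof.
have classes_catalog : num_classes_U R k (size (catalog k)).
  by apply/num_classes_U_transversal; exists catalog_spaces; exact: transversal_catalog.
have /num_classes_U_transversal[f tf] : num_classes_U R k (B R k).
  exact: classical_sets.xgetPex (ex_intro _ _ classes_catalog).
exact (transversal_unique um_cong_sym um_cong_trans tf transversal_catalog).
Qed.
End Counting.

Local Close Scope ring_scope.

Theorem theorem19 (R : realType) :
  (forall i : nat,
      B R (2 * i + 1) =
        (B R i * (B R i).+1 %/ 2 + \sum_(0 <= j < i) B R (2 * i + 1 - j - 1) * B R j)%N) /\
  (forall i : nat, (1 <= i)%N ->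
      B R (2 * i) = (\sum_(0 <= j < i) B R (2 * i - j - 1) * B R j)%N) /\
  B R 1 = 1%N /\ B R 2 = 1%N /\ B R 3 = 2%N.
Proof.
have -> : B R = fun k => size (catalog k) by apply: funext => k; exact: B_catalog.
have [B1 B2 B3] := size_catalog123.
by split; [exact: size_catalog_odd | split; [exact: size_catalog_even | ]].
Qed.
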